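(* If an $r$-graph $H$ is $2$-locally large, then $H$ has at least three edges.
   Context: An $r$-graph is an $r$-uniform hypergraph. Let $H$ be an $r$-graph on $m$ vertices and $\sigma:V(H)\to[m]$ a bijection. For $x\in V(H)$ and $1\le i\le r$, $T_x^i$ is the set of edges $e\ni x$ such that $\sigma(x)$ is the $i$-th smallest of the values $\sigma(v)$, $v\in e$. For $r+1\le i\le 2r+1$, $T_x^i$ is the set of edges $e\not\ni x$ such that $\sigma(x)$ is the $(i-r)$-th smallest among the values $\sigma(v)$, $v\in e\cup\{x\}$. $H$ is $2$-locally large if there exists a bijection $\sigma:V(H)\to[m]$ such that for every vertex $x\in V(H)$ some $T_x^i$, $i\in[2r+1]$, contains at least two edges. *)

From mathcomp Require Import all_boot.
Set Implicit Arguments. Unset Strict Implicit. Unset Printing Implicit Defensive.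

Definition uniform (V : finType) (r : nat) (E : {set {set V}}) : Prop :=
  forall e, e \in E -> #|e| = r.

(* position of x among the sigma-values of S (1-based): sigma(x) is the
   (rank sigma x S)-th smallest of the values sigma(v), v in S (when x \in S). *)
Definition rank (V : finType) (m : nat) (sigma : V -> 'I_m) (x : V) (S : {set V}) : nat :=
  #|[set v in S | (sigma v <= sigma x)%N]|.

Definition Tset (V : finType) (r : nat) (E : {set {set V}}) (m : nat)
    (sigma : V -> 'I_m) (x : V) (i : nat) : {set {set V}} :=
  if (i <= r)%N then
    [set e in E | (x \in e) && (rank sigma x e == i)]
  else
    [set e in E | (x \notin e) && (rank sigma x (x |: e) == i - r)].

Definition locally_large2 (V : finType) (r : nat) (E : {set {set V}}) : Prop :=
  exists sigma : V -> 'I_#|V|, bijective sigma /\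
    forall x : V, exists i : nat,
      [/\ (1 <= i)%N, (i <= 2 * r + 1)%N & (2 <= #|Tset r E sigma x i|)%N].

From mathcomp Require Import all_boot.
Set Implicit Arguments. Unset Strict Implicit. Unset Printing Implicit Defensive.

(* Suppose [E] had at most two edges.  Any [T_x^i] with two edges is then all
   of [E] = {e1, e2}, and the edges of one [T_x^i] either all contain [x] or
   all avoid it.  Since every vertex has such a [T_x^i], no vertex separates
   [e1] from [e2], so [e1 = e2]: a contradiction. *)

Section Tset.

Variables (V : finType) (r : nat) (E : {set {set V}}) (m : nat).
Variable sigma : V -> 'I_m.

Lemma Tset_sub x i : Tset r E sigma x i \subset E.
Proof. by rewrite /Tset; case: ifP => _; apply/subsetP => e; rewrite inE => /andP[]. Qed.

Lemma Tset_mem_agree x i e1 e2 :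
  e1 \in Tset r E sigma x i -> e2 \in Tset r E sigma x i -> (x \in e1) = (x \in e2).
Proof.
rewrite /Tset; case: ifP => _; rewrite !inE.
- by move=> /and3P[_ -> _] /and3P[_ -> _].
- by move=> /and3P[_ /negbTE -> _] /and3P[_ /negbTE -> _].
Qed.

Lemma Tset_full x i :
  (#|E| <= 2)%N -> (2 <= #|Tset r E sigma x i|)%N -> Tset r E sigma x i = E.
Proof.
move=> leE2 leT2; apply/eqP; rewrite eqEcard Tset_sub /=.
exact: leq_trans leE2 leT2.
Qed.

End Tset.

Theorem proposition1 (V : finType) (r : nat) (E : {set {set V}}) :
  uniform r E -> (0 < #|V|)%N -> locally_large2 r E -> (3 <= #|E|)%N.
Proof.
move=> _ /card_gt0P[x0 _] [sigma [_ largeT]].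
rewrite leqNgt; apply/negP => leE2.
have [i0 [_ _ twoT0]] := largeT x0.
have /card_gt1P[e1 [e2 [e1T0 e2T0 /negP ne12]]] := twoT0.
rewrite (Tset_full leE2 twoT0) in e1T0 e2T0.
apply: ne12; apply/eqP/setP => x.
have [i [_ _ twoT]] := largeT x.
rewrite -(Tset_full leE2 twoT) in e1T0 e2T0.
exact: Tset_mem_agree e1T0 e2T0.
Qed.
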